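(* Assume $\mathfrak g$ is noncompact and has no nonzero proper $\sigma$-stable ideals. Then every root $\alpha\in\Sigma$ with $\mathfrak k_\mathbb C(\mathfrak t,\alpha)\ne\{0\}$ can be written as $\alpha=\beta+\gamma$ with $\beta,\gamma\in\Sigma(\mathfrak m_\mathbb C,\mathfrak t)\cup\{0\}$.
   Context: Let $G$ be a connected real semisimple Lie group with Lie algebra $\mathfrak g$. Let $\sigma$ be an involution of $G$ and $\theta$ a Cartan involution with $\sigma\theta=\theta\sigma$; the same letters denote the induced involutions of $\mathfrak g$. Let $\mathfrak g=\mathfrak k\oplus\mathfrak m$ and $\mathfrak g=\mathfrak h\oplus\mathfrak q$ be the $\pm1$-eigenspace decompositions for $\theta$ and $\sigma$. Let $\mathfrak t$ be a maximal abelian subspace of $\mathfrak k\cap\mathfrak q$. For a linear form $\alpha:\mathfrak t\to i\mathbb R$ put - $\mathfrak g_\mathbb C(\mathfrak t,\alpha)=\{X\in\mathfrak g_\mathbb C\mid[Y,X]=\alpha(Y)X\ \forall Y\in\mathfrak t\}$, - $\mathfrak k_\mathbb C(\mathfrak t,\alpha)=\mathfrak g_\mathbb C(\mathfrak t,\alpha)\cap\mathfrak k_\mathbb C$, - $\mathfrak m_\mathbb C(\mathfrak t,\alpha)=\mathfrak g_\mathbb C(\mathfrak t,\alpha)\cap\mathfrak m_\mathbb C$. Let $\Sigma=\{\alpha\neq0\mid\mathfrak g_\mathbb C(\mathfrak t,\alpha)\ne\{0\}\}$ and $\Sigma(\mathfrak m_\mathbb C,\mathfrak t)=\{\alpha\ne0\mid\mathfrak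 m_\mathbb C(\mathfrak t,\alpha)\ne\{0\}\}$. *)

From HB Require Import structures.
From mathcomp Require Import all_boot all_order all_algebra.
From mathcomp Require Import reals.
From mathcomp.real_closed Require Import complex.
Set Implicit Arguments. Unset Strict Implicit. Unset Printing Implicit Defensive.
Import Order.TTheory GRing.Theory Num.Theory.
Local Open Scope ring_scope.
Local Open Scope complex_scope.

(* A real Lie algebra of dimension n is modelled on R^n ('rV[R]_n) by its
   structure constants c i j k : [e_i, e_j] = \sum_k c i j k e_k.
   The same constants define the bracket of the complexification C^n. *)

Section LieDefs.
Variable R : realType.
Variable n : nat.
Local Notation C := (complex R).

Definition cst := 'I_n -> 'I_n -> 'I_n -> R.

Definition lbr_gen (F : comNzRingType) (c : 'I_n -> 'I_n -> 'I_n -> F)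
    (x y : 'rV[F]_n) : 'rV[F]_n :=
  \row_k \sum_i \sum_j x 0 i * y 0 j * c i j k.

Definition lbr (c : cst) (x y : 'rV[R]_n) := lbr_gen c x y.

Definition lbrC (c : cst) (x y : 'rV[C]_n) :=
  lbr_gen (fun i j k => (c i j k)%:C) x y.

Definition cplx {m p} (A : 'M[R]_(m, p)) : 'M[C]_(m, p) :=
  map_mx (fun x : R => x%:C) A.

Definition is_lie (c : cst) :=
  (forall x, lbr c x x = 0) /\
  (forall x y z, lbr c x (lbr c y z) + lbr c y (lbr c z x)
                 + lbr c z (lbr c x y) = 0).

(* matrix of ad X acting on row vectors: row j is [X, e_j] *)
Definition adm (c : cst) (x : 'rV[R]_n) : 'M[R]_n :=
  \matrix_(j, k) (lbr c x (delta_mx 0 j)) 0 k.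

Definition killing (c : cst) (x y : 'rV[R]_n) : R :=
  \tr (adm c x *m adm c y).

(* semisimple: Killing form nondegenerate (Cartan's criterion / Helgason's def.) *)
Definition semisimple (c : cst) :=
  forall x, (forall y, killing c x y = 0) -> x = 0.

Definition compact_lie (c : cst) :=
  forall x, x != 0 -> killing c x x < 0.

(* linear automorphisms of g are given by matrices acting on the right *)
Definition is_aut (c : cst) (S : 'M[R]_n) :=
  S \in unitmx /\ forall x y, lbr c (x *m S) (y *m S) = lbr c x y *m S.

Definition is_invol (c : cst) (S : 'M[R]_n) := is_aut c S /\ S *m S = 1%:M.

Definition cartan_invol (c : cst) (th : 'M[R]_n) :=
  is_invol c th /\ forall x, x != 0 -> 0 < - killing c x (x *m th).

(* subspaces of g are row spaces of n x n matrices *)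
Definition ideal (c : cst) (U : 'M[R]_n) :=
  forall x y : 'rV[R]_n, (y <= U)%MS -> (lbr c x y <= U)%MS.

Definition stable (S U : 'M[R]_n) :=
  forall y : 'rV[R]_n, (y <= U)%MS -> (y *m S <= U)%MS.

Definition no_sigma_ideals (c : cst) (sg : 'M[R]_n) :=
  forall U : 'M[R]_n, ideal c U -> stable sg U ->
    \rank U = 0%N \/ \rank U = n.

Definition in_kq (th sg : 'M[R]_n) (y : 'rV[R]_n) :=
  y *m th = y /\ y *m sg = - y.

Definition abelian_sub (c : cst) (U : 'M[R]_n) :=
  forall y z : 'rV[R]_n, (y <= U)%MS -> (z <= U)%MS -> lbr c y z = 0.

Definition sub_kq (th sg U : 'M[R]_n) :=
  forall y : 'rV[R]_n, (y <= U)%MS -> in_kq th sg y.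

Definition max_abelian_kq (c : cst) (th sg T : 'M[R]_n) :=
  sub_kq th sg T /\ abelian_sub c T /\
  forall U : 'M[R]_n, (T <= U)%MS -> sub_kq th sg U -> abelian_sub c U ->
    (U <= T)%MS.

(* a : t -> iR linear form (given by its values on vectors of t) *)
Definition lin_form (T : 'M[R]_n) (a : 'rV[R]_n -> C) :=
  (forall y z : 'rV[R]_n, (y <= T)%MS -> (z <= T)%MS -> a (y + z) = a y + a z) /\
  (forall (r : R) (y : 'rV[R]_n), (y <= T)%MS -> a (r *: y) = r%:C * a y) /\
  (forall y : 'rV[R]_n, (y <= T)%MS -> complex.Re (a y) = 0).

Definition form_zero (T : 'M[R]_n) (a : 'rV[R]_n -> C) :=
  forall y : 'rV[R]_n, (y <= T)%MS -> a y = 0.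

Definition in_gC (c : cst) (T : 'M[R]_n) (a : 'rV[R]_n -> C) (x : 'rV[C]_n) :=
  forall y : 'rV[R]_n, (y <= T)%MS -> lbrC c (cplx y) x = a y *: x.

Definition gC_nz c T a := exists x, x != 0 /\ in_gC c T a x.
Definition kC_nz c (th : 'M[R]_n) T a :=
  exists x, x != 0 /\ in_gC c T a x /\ x *m cplx th = x.
Definition mC_nz c (th : 'M[R]_n) T a :=
  exists x, x != 0 /\ in_gC c T a x /\ x *m cplx th = - x.

Definition in_Sigma c T a := lin_form T a /\ ~ form_zero T a /\ gC_nz c T a.
Definition in_Sigma_m c th T a :=
  lin_form T a /\ ~ form_zero T a /\ mC_nz c th T a.

End LieDefs.

(* Complexify and use the Hermitian form H(u, v) = - B(u, theta (conj v)) on g_C,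
   positive definite because theta is a Cartan involution.  For Y in t, ad Y is
   H-skew (Y lies in k), so the commuting family ad t acts on m_C with imaginary
   eigenvalues, weight spaces of distinct weights are H-orthogonal, and m_C is
   spanned by t-weight vectors.  Since g is noncompact, m <> 0, and m + [m, m] is
   a sigma-stable ideal, hence all of g; comparing theta-eigenspaces gives
   k = [m, m], so k_C is spanned by brackets [u, v] of weight vectors of m_C, of
   weights beta and gamma.  A nonzero X in k_C(t, alpha) has H(X, X) <> 0, so X
   is not H-orthogonal to one of these brackets, whose weight beta + gamma must
   then be alpha. *)

From HB Require Import structures.
From mathcomp Require Import all_boot all_order all_algebra.
From mathcomp Require Import reals.
From mathcomp.real_closed Require Import complex.
From mathcomp Require Import zify.
From Stdlib Require Import Classical.
Set Implicit Arguments. Unset Strict Implicit. Unset Printing Implicit Defensive.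
Import Order.TTheory GRing.Theory Num.Theory.
Local Open Scope ring_scope.

Section AdjointMatrix.
Variables (F : comNzRingType) (n : nat) (cc : 'I_n -> 'I_n -> 'I_n -> F).

Definition ad_mx (x : 'rV[F]_n) : 'M[F]_n := \matrix_(j, k) \sum_i x 0 i * cc i j k.

Fact ad_mx_is_semilinear : semilinear ad_mx.
Proof.
split=> [a x | x y]; apply/matrixP => j k; rewrite !mxE.
  by rewrite mulr_sumr; apply: eq_bigr => i _; rewrite mxE mulrA.
by rewrite -big_split; apply: eq_bigr => i _; rewrite mxE mulrDl.
Qed.

HB.instance Definition _ :=
  GRing.isSemilinear.Build F 'rV[F]_n 'M[F]_n _ ad_mx ad_mx_is_semilinear.

Lemma lbr_genE x y : lbr_gen cc x y = y *m ad_mx x.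
Proof.
apply/rowP => k; rewrite !mxE exchange_big; apply: eq_bigr => j _.
by rewrite !mxE mulr_sumr; apply: eq_bigr => i _; rewrite mulrCA mulrA.
Qed.

(* Rows act on the right: [v *m ad_mx x] is the bracket [x, v] (lbr_genE), so
   [ad_derivation] is the Jacobi identity, saying that each ad y is a derivation. *)
Definition ad_derivation :=
  forall x y, ad_mx x *m ad_mx y = ad_mx (x *m ad_mx y) + ad_mx y *m ad_mx x.

Lemma ad_mx_expand x : ad_mx x = \sum_i x 0 i *: ad_mx (delta_mx 0 i).
Proof.
by rewrite {1}[x]row_sum_delta linear_sum; apply: eq_bigr => i _; rewrite linearZ.
Qed.

Lemma ad_derivation_basis :
  (forall i j : 'I_n, ad_mx (delta_mx 0 i) *m ad_mx (delta_mx 0 j) =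
     ad_mx (delta_mx 0 i *m ad_mx (delta_mx 0 j))
     + ad_mx (delta_mx 0 j) *m ad_mx (delta_mx 0 i)) ->
  ad_derivation.
Proof.
move=> Dij; have Dx j x : ad_mx x *m ad_mx (delta_mx 0 j) =
    ad_mx (x *m ad_mx (delta_mx 0 j)) + ad_mx (delta_mx 0 j) *m ad_mx x.
  rewrite (ad_mx_expand x) {2}[x]row_sum_delta mulmx_suml !mulmx_sumr mulmx_suml.
  rewrite linear_sum -big_split; apply: eq_bigr => i _ /=.
  by rewrite -scalemxAl -scalemxAr -scalemxAl linearZ Dij scalerDr.
move=> x y; rewrite (ad_mx_expand y) mulmx_sumr mulmx_suml !linear_sum.
rewrite -big_split; apply: eq_bigr => j _ /=.
by rewrite -scalemxAr -scalemxAl -scalemxAr !linearZ /= Dx scalerDr.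
Qed.

End AdjointMatrix.

Lemma map_ad_mx (F G : comNzRingType) (f : {rmorphism F -> G}) n
    (cc : 'I_n -> 'I_n -> 'I_n -> F) x :
  ad_mx (fun i j k => f (cc i j k)) (map_mx f x) = map_mx f (ad_mx cc x).
Proof.
apply/matrixP => j k; rewrite !mxE rmorph_sum; apply: eq_bigr => i _.
by rewrite !mxE rmorphM.
Qed.

Lemma map_ad_derivation (F G : comNzRingType) (f : {rmorphism F -> G}) n
    (cc : 'I_n -> 'I_n -> 'I_n -> F) :
  ad_derivation cc -> ad_derivation (fun i j k => f (cc i j k)).
Proof.
move=> Dcc; apply: ad_derivation_basis => i j.
have map_delta (l : 'I_n) : delta_mx 0 l = map_mx f (delta_mx 0 l).
  by apply/matrixP => a b; rewrite !mxE; case: (_ && _); rewrite ?rmorph1 ?rmorph0.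
by rewrite !map_delta !map_ad_mx -!map_mxM map_ad_mx -map_mxD Dcc.
Qed.

Section BracketSpan.
Variables (F : fieldType) (n : nat) (cc : 'I_n -> 'I_n -> 'I_n -> F).

Definition brmx m p (A : 'M[F]_(m, n)) (B : 'M[F]_(p, n)) : 'M[F]_n :=
  (\sum_(ij : 'I_m * 'I_p) <<lbr_gen cc (row ij.1 A) (row ij.2 B)>>)%MS.

Lemma brmx_sub m p (A : 'M_(m, n)) (B : 'M_(p, n)) u v :
  (u <= A)%MS -> (v <= B)%MS -> (lbr_gen cc u v <= brmx A B)%MS.
Proof.
case/submxP => a ->; case/submxP => b ->; rewrite !mulmx_sum_row lbr_genE.
rewrite linear_sum mulmx_sumr; apply: summx_sub => i _.
rewrite linearZ -scalemxAr mulmx_suml; apply: scalemx_sub; apply: summx_sub => j _.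
rewrite -scalemxAl; apply: scalemx_sub; rewrite -lbr_genE.
by apply: (sumsmx_sup (i, j)); rewrite ?genmxE.
Qed.

Lemma brmxS m p m' p' (A : 'M_(m, n)) (B : 'M_(p, n)) (A' : 'M_(m', n))
    (B' : 'M_(p', n)) :
  (A <= A')%MS -> (B <= B')%MS -> (brmx A B <= brmx A' B')%MS.
Proof.
move=> sAA' sBB'; apply/sumsmx_subP => ij _; rewrite genmxE.
by apply: brmx_sub; rewrite (submx_trans (row_sub _ _)).
Qed.

End BracketSpan.

Lemma bilinear_mx_eq (F : comNzRingType) n (M N : 'M[F]_n) :
  (forall x y : 'rV_n, (x *m M *m y^T) 0 0 = (x *m N *m y^T) 0 0) -> M = N.
Proof.
have entry (A : 'M[F]_n) i j :
    ((delta_mx 0 i : 'rV_n) *m A *m (delta_mx 0 j : 'rV_n)^T) 0 0 = A i j.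
  by rewrite -(rowE i A) trmx_delta -(colE j (row i A)) mxE [row _ _ _ _]mxE.
by move=> eqMN; apply/matrixP => i j; rewrite -entry eqMN entry.
Qed.

Section RealLieAlgebra.
Variables (R : realType) (n : nat) (c : cst R n).
Hypothesis lie_c : is_lie c.

Lemma admE x : adm c x = ad_mx c x.
Proof. by apply/matrixP => j k; rewrite mxE /lbr lbr_genE -rowE mxE. Qed.

Lemma lbrE x y : lbr c x y = y *m adm c x.
Proof. by rewrite admE /lbr lbr_genE. Qed.

Lemma lbr_anti x y : lbr c x y = - lbr c y x.
Proof.
have := (proj1 lie_c) (x + y); rewrite !lbrE !admE !linearD /= !mulmxDl.
by rewrite -!admE -!lbrE !(proj1 lie_c) add0r addr0 => /eqP; rewrite addr_eq0 => /eqP.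
Qed.

Lemma adm_derivation : ad_derivation c.
Proof.
move=> x y; apply/row_matrixP => i; rewrite !rowE -!admE mulmxDr !mulmxA -!lbrE.
have := (proj2 lie_c) y x (delta_mx 0 i).
rewrite (lbr_anti _ y) (lbr_anti _ (lbr c y x)) [lbr c x (- _)]lbrE mulNmx -lbrE.
by move/eqP; rewrite -addrA -opprD subr_eq0 addrC => /eqP.
Qed.

Lemma lbr_derivation x y z :
  lbr c x (lbr c y z) = lbr c (lbr c x y) z + lbr c y (lbr c x z).
Proof. by rewrite !lbrE !admE -mulmxA adm_derivation mulmxDr mulmxA. Qed.

Lemma killingC x y : killing c x y = killing c y x.
Proof. exact: mxtrace_mulC. Qed.

Lemma killing_invariant x y z :
  killing c (x *m adm c y) z = - killing c x (z *m adm c y).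
Proof.
have adE u : adm c (u *m adm c y) = adm c u *m adm c y - adm c y *m adm c u.
  by rewrite !admE adm_derivation addrK.
rewrite /killing !adE mulmxBl mulmxBr !mxtraceD !raddfN /= opprB -!mulmxA.
by congr (_ - _); rewrite mxtrace_mulC -mulmxA.
Qed.

Definition killing_mx : 'M[R]_n :=
  \matrix_(i, j) killing c (delta_mx 0 i) (delta_mx 0 j).

Lemma killing_mxE x y : killing c x y = (x *m killing_mx *m y^T) 0 0.
Proof.
rewrite /killing !admE !ad_mx_expand mulmx_suml linear_sum mxE.
under [RHS]eq_bigr do rewrite mxE mulr_suml; rewrite [RHS]exchange_big.
apply: eq_bigr => i _; rewrite mulmx_sumr linear_sum; apply: eq_bigr => j _ /=.
by rewrite -scalemxAl -scalemxAr !linearZ !mxE /killing -!admE /= mulrA mulrAC.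
Qed.

Lemma killing_mx_tr : killing_mx^T = killing_mx.
Proof. by apply/matrixP => i j; rewrite !mxE killingC. Qed.

Lemma adm_killing_mx_skew y :
  adm c y *m killing_mx = - (killing_mx *m (adm c y)^T).
Proof.
apply: bilinear_mx_eq => x z; rewrite mulmxA -killing_mxE killing_invariant.
by rewrite killing_mxE trmx_mul mulmxN mulNmx [RHS]mxE !mulmxA.
Qed.

Lemma adm_invol S x : is_invol c S -> adm c (x *m S) = S *m adm c x *m S.
Proof.
case=> [[_ autS] SS]; apply/row_matrixP => i; rewrite !rowE -!lbrE.
by rewrite -{1}(mulmx1 (delta_mx 0 i)) -SS mulmxA autS lbrE !mulmxA.
Qed.

Lemma killing_mx_invol S : is_invol c S -> S *m killing_mx *m S^T = killing_mx.
Proof.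
move=> invS; apply: bilinear_mx_eq => x y.
rewrite !mulmxA -[_ *m y^T]mulmxA -trmx_mul -!killing_mxE /killing !adm_invol //.
have [_ SS] := invS.
by rewrite -!mulmxA (mulmxA S S) SS mul1mx mxtrace_mulC -!mulmxA SS mulmx1.
Qed.

Lemma adm_commute S y : is_invol c S -> y *m S = y -> S *m adm c y = adm c y *m S.
Proof.
move=> invS yS; have := adm_invol y invS; rewrite yS => E.
by case: invS => _ SS; rewrite {2}E -mulmxA SS mulmx1.
Qed.

Definition cartan_mx (th : 'M[R]_n) := - (killing_mx *m th^T).

Lemma cartan_mxE th x y : - killing c x (y *m th) = (x *m cartan_mx th *m y^T) 0 0.
Proof. by rewrite killing_mxE trmx_mul mulmxN mulNmx [RHS]mxE !mulmxA. Qed.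

Lemma cartan_mx_tr th : is_invol c th -> (cartan_mx th)^T = cartan_mx th.
Proof.
move=> invth; have [_ thth] := invth.
rewrite /cartan_mx linearN /= trmx_mul trmxK killing_mx_tr; congr (- _).
by rewrite -{2}(killing_mx_invol invth) -!mulmxA -trmx_mul thth trmx1 mulmx1.
Qed.

Lemma cartan_mx_skew th y : is_invol c th -> y *m th = y ->
  adm c y *m cartan_mx th = - (cartan_mx th *m (adm c y)^T).
Proof.
move=> invth yth; rewrite /cartan_mx mulmxN mulNmx opprK mulmxA.
rewrite adm_killing_mx_skew mulNmx opprK -!mulmxA -trmx_mul (adm_commute invth yth).
by rewrite trmx_mul.
Qed.

Lemma cartan_mx_pos th (x : 'rV[R]_n) : cartan_invol c th -> x != 0 ->
  0 < (x *m cartan_mx th *m x^T) 0 0.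
Proof. by case=> _ pos x0; rewrite -cartan_mxE; exact: pos. Qed.

End RealLieAlgebra.

Section CartanDecomposition.
Variables (R : realType) (n : nat) (c : cst R n) (th : 'M[R]_n).
Hypotheses (lie_c : is_lie c) (invol_th : is_invol c th).

Local Notation kk := (eigenspace th 1).
Local Notation mm := (eigenspace th (-1)).
Local Notation brmm := (brmx c mm mm).

Lemma lbr_eigenspace a b x y :
  (x <= eigenspace th a)%MS -> (y <= eigenspace th b)%MS ->
  (lbr c x y <= eigenspace th (a * b))%MS.
Proof.
case: invol_th => -[_ aut_th] _ /eigenspaceP xa /eigenspaceP yb; apply/eigenspaceP.
by rewrite -aut_th xa yb !lbrE admE !linearZ /= -scalemxAl scalerA mulrC -admE.
Qed.

Lemma sub_kk_mm (x : 'rV[R]_n) : (x <= kk + mm)%MS.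
Proof.
have [_ thth] := invol_th; have h2 : (2 : R) != 0 by rewrite pnatr_eq0.
have -> : x = 2^-1 *: (x + x *m th) + 2^-1 *: (x - x *m th).
  by rewrite -scalerDr addrACA subrr addr0 -mulr2n -scaler_nat scalerA mulVf ?scale1r.
apply: addmx_sub_adds; apply: scalemx_sub; apply/eigenspaceP.
  by rewrite mulmxDl -mulmxA thth mulmx1 scale1r addrC.
by rewrite mulmxBl -mulmxA thth mulmx1 scaleN1r opprB.
Qed.

Lemma kk_mm_eq0 (x : 'rV[R]_n) : (x <= kk)%MS -> (x <= mm)%MS -> x = 0.
Proof.
move=> /eigenspaceP xk /eigenspaceP; rewrite xk scale1r scaleN1r => /eqP.
by rewrite -subr_eq0 opprK -mulr2n -scaler_nat scaler_eq0 pnatr_eq0 => /eqP.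
Qed.

Lemma brmm_sub_kk : (brmm <= kk)%MS.
Proof.
apply/sumsmx_subP => ij _; rewrite genmxE.
by have := lbr_eigenspace (row_sub ij.1 mm) (row_sub ij.2 mm); rewrite mulrNN mulr1.
Qed.

Lemma lbr_kk_mm z u : (z <= kk)%MS -> (u <= mm)%MS -> (lbr c z u <= mm)%MS.
Proof. by move=> zk um; have := lbr_eigenspace zk um; rewrite mul1r. Qed.

Lemma lbr_mm_kk u z : (u <= mm)%MS -> (z <= kk)%MS -> (lbr c u z <= mm)%MS.
Proof. by move=> um zk; have := lbr_eigenspace um zk; rewrite mulr1. Qed.

Lemma lbr_kk_brmm (z s : 'rV[R]_n) :
  (z <= kk)%MS -> (s <= brmm)%MS -> (lbr c z s <= brmm)%MS.
Proof.
move=> zk sB; rewrite lbrE; apply: submx_trans (submxMr _ sB) _.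
rewrite sumsmxMr; apply/sumsmx_subP => ij _; rewrite (eqmxMr _ (genmxE _)) -lbrE.
by rewrite (lbr_derivation lie_c); apply: addmx_sub; apply: brmx_sub;
  rewrite ?lbr_kk_mm ?row_sub.
Qed.

Lemma mm_brmm_ideal : ideal c (mm + brmm)%MS.
Proof.
move=> x y /sub_addsmxP[[u s] /= ->]; have /sub_addsmxP[[xk xm] /= ->] := sub_kk_mm x.
rewrite !lbrE admE linearD /= mulmxDl !mulmxDr -!admE -!lbrE.
have [um sB] := (submxMl u mm, submxMl s brmm).
have [xkk xmm] := (submxMl xk kk, submxMl xm mm).
apply: addmx_sub; apply: addmx_sub.
- exact: submx_trans (lbr_kk_mm xkk um) (addsmxSl _ _).
- exact: submx_trans (brmx_sub c xmm um) (addsmxSr _ _).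
- exact: submx_trans (lbr_kk_brmm xkk sB) (addsmxSr _ _).
- exact: submx_trans (lbr_mm_kk xmm (submx_trans sB brmm_sub_kk)) (addsmxSl _ _).
Qed.

Lemma mm_brmm_stable sg : is_invol c sg -> th *m sg = sg *m th ->
  stable sg (mm + brmm)%MS.
Proof.
move=> [[_ aut_sg] _] th_sg.
have mm_sg : stablemx mm sg by apply: comm_mx_stable_eigenspace.
have brmm_sg : stablemx brmm sg.
  rewrite sumsmxMr; apply/sumsmx_subP => ij _; rewrite (eqmxMr _ (genmxE _)) -aut_sg.
  by apply: brmx_sub; apply: submx_trans (submxMr _ (row_sub _ _)) mm_sg.
by move=> y yU; apply: submx_trans (submxMr sg yU) (stableDmx mm_sg brmm_sg).
Qed.

Lemma noncompact_mm_neq0 : cartan_invol c th -> ~ compact_lie c -> mm != 0.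
Proof.
move=> [_ pos] noncpt; apply/negP => /eqP mm0; apply: noncpt => x x0.
have : (x - x *m th <= mm)%MS.
  apply/eigenspaceP; case: invol_th => _ thth.
  by rewrite mulmxBl -mulmxA thth mulmx1 scaleN1r opprB.
rewrite mm0 submx0 subr_eq0 => /eqP xth.
by have := pos x x0; rewrite -xth oppr_gt0.
Qed.

Lemma kk_sub_brmm sg : cartan_invol c th -> ~ compact_lie c ->
  no_sigma_ideals c sg -> is_invol c sg -> th *m sg = sg *m th -> (kk <= brmm)%MS.
Proof.
move=> cartan_th noncpt nsi invsg th_sg.
have [/eqP|rU] := nsi _ mm_brmm_ideal (mm_brmm_stable invsg th_sg).
  rewrite mxrank_eq0 => /eqP U0; have := noncompact_mm_neq0 cartan_th noncpt.
  by rewrite -submx0 -U0 addsmxSl.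
apply/rV_subP => z zk; have := submx_full z (introT eqP rU : row_full _).
case/sub_addsmxP => -[u s] /= Ez; rewrite Ez.
have sk : (s *m brmm <= kk)%MS := submx_trans (submxMl _ _) brmm_sub_kk.
suff -> : u *m mm = 0 by rewrite add0r submxMl.
apply: kk_mm_eq0; last exact: submxMl.
have -> : u *m mm = z - s *m brmm by rewrite Ez addrK.
by apply: addmx_sub; rewrite ?eqmx_opp.
Qed.

End CartanDecomposition.

Section Complexification.
Variable R : realType.
Local Notation Re := (@complex.Re R).
Local Notation Im := (@complex.Im R).
Local Notation cj := (map_mx (@conjc R)).

Lemma cplx_ReIm m p (A : 'M[R[i]]_(m, p)) :
  A = cplx (map_mx Re A) + 'i%C *: cplx (map_mx Im A).
Proof. by apply/matrixP => i j; rewrite !mxE -complexE. Qed.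

Lemma Re_cplxI m p (a b : 'M[R]_(m, p)) : map_mx Re (cplx a + 'i%C *: cplx b) = a.
Proof. by apply/matrixP => i j; rewrite !mxE /=; simpc. Qed.

Lemma Im_cplxI m p (a b : 'M[R]_(m, p)) : map_mx Im (cplx a + 'i%C *: cplx b) = b.
Proof. by apply/matrixP => i j; rewrite !mxE /=; simpc. Qed.

Lemma cj_cplxI m p (a b : 'M[R]_(m, p)) :
  cj (cplx a + 'i%C *: cplx b) = cplx a - 'i%C *: cplx b.
Proof. by apply/matrixP => i j; rewrite !mxE /=; simpc. Qed.

Lemma conjc_imag (z : R[i]) : complex.Re z = 0 -> (z^*)%C = - z.
Proof. by case: z => a b /= ->; simpc. Qed.

Lemma cj_cplx m p (a : 'M[R]_(m, p)) : cj (cplx a) = cplx a.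
Proof. by apply/matrixP => i j; rewrite !mxE conjc_real. Qed.

Lemma eigenspace_cplx_ReIm n (A : 'M[R]_n) (e : R) (u : 'rV[R[i]]_n) :
  (u <= eigenspace (cplx A) e%:C%C)%MS ->
  (map_mx Re u <= eigenspace A e)%MS /\ (map_mx Im u <= eigenspace A e)%MS.
Proof.
set a := map_mx Re u; set b := map_mx Im u; move/eigenspaceP.
rewrite [u]cplx_ReIm mulmxDl -scalemxAl -!map_mxM scalerDr scalerA mulrC -scalerA.
rewrite -!map_mxZ => E; split; apply/eigenspaceP.
  by have := congr1 (map_mx Re) E; rewrite !Re_cplxI.
by have := congr1 (map_mx Im) E; rewrite !Im_cplxI.
Qed.

End Complexification.

Section HermitianForm.
Variables (R : realType) (n : nat) (P : 'M[R]_n).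
Local Notation cj := (map_mx (@conjc R)).

Definition herm (u v : 'rV[R[i]]_n) : R[i] := (u *m cplx P *m (cj v)^T) 0 0.

Lemma hermZl a u v : herm (a *: u) v = a * herm u v.
Proof. by rewrite /herm -!scalemxAl mxE. Qed.

Lemma hermZr a u v : herm u (a *: v) = (a^*)%C * herm u v.
Proof.
rewrite /herm.
have -> : cj (a *: v) = (a^*)%C *: cj v by apply/matrixP => i j; rewrite !mxE rmorphM.
by rewrite linearZ /= -scalemxAr mxE.
Qed.

Lemma herm_skew (A : 'M[R]_n) u v : A *m P = - (P *m A^T) ->
  herm (u *m cplx A) v = - herm u (v *m cplx A).
Proof.
move=> skewA; rewrite /herm -(mulmxA u) -map_mxM skewA map_mxN map_mxM.
by rewrite map_mxM cj_cplx trmx_mul map_trmx mulmxN mulNmx !mulmxA [LHS]mxE map_trmx.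
Qed.

Lemma herm_kermxP m (V : 'M[R[i]]_(m, n)) u :
  reflect (forall v, (v <= V)%MS -> herm u v = 0)
          (u <= kermx (cplx P *m (cj V)^T))%MS.
Proof.
rewrite sub_kermx mulmxA; apply: (iffP eqP) => [uV v /submxP[d ->] | orthV].
  by rewrite /herm map_mxM trmx_mul mulmxA uV mul0mx mxE.
apply/rowP => j; rewrite [RHS]mxE -(orthV (row j V)) ?row_sub // !mxE.
by rewrite /herm mxE; apply: eq_bigr => k _; rewrite !mxE.
Qed.

Hypotheses (P_tr : P^T = P)
  (P_pos : forall x : 'rV[R]_n, x != 0 -> 0 < (x *m P *m x^T) 0 0).

Lemma herm_neq0 u : u != 0 -> herm u u != 0.
Proof.
set a := map_mx (@complex.Re R) u; set b := map_mx (@complex.Im R) u.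
have Eu : u = cplx a + 'i%C *: cplx b by exact: cplx_ReIm.
have tr11 (M : 'M[R[i]]_1) : M^T = M by rewrite [M]mx11_scalar tr_scalar_mx.
have cross : cplx b *m cplx P *m (cplx a)^T = cplx a *m cplx P *m (cplx b)^T.
  by rewrite -[LHS]tr11 !trmx_mul trmxK map_trmx P_tr mulmxA.
have -> : herm u u = cplx (a *m P *m a^T + b *m P *m b^T) 0 0.
  rewrite /herm {2}Eu cj_cplxI Eu linearB linearZ /= !mulmxDl !mulmxBr.
  rewrite -!scalemxAl -!scalemxAr cross scalerA addrA subrK -expr2 sqrCi scaleN1r.
  by rewrite opprK !map_trmx -!map_mxM -map_mxD.
have ge0 (x : 'rV[R]_n) : 0 <= (x *m P *m x^T) 0 0.
  by have [->|/P_pos/ltW//] := eqVneq x 0; rewrite !mul0mx mxE.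
move=> u0; rewrite mxE fmorph_eq0 mxE; apply: lt0r_neq0.
have [a0|b0] : a != 0 \/ b != 0.
  apply/orP; apply: contraNT u0; rewrite negb_or !negbK => /andP[/eqP a0 /eqP b0].
  by rewrite Eu a0 b0 /cplx !map_mx0 scaler0 addr0.
- apply: ltr_pwDl; [exact: P_pos | exact: ge0].
- apply: ltr_pwDr; [exact: P_pos | exact: ge0].
Qed.

Lemma herm_brmx_neq0 (cc : 'I_n -> 'I_n -> 'I_n -> R[i]) m p
    (A : 'M_(m, n)) (B : 'M_(p, n)) u :
  u != 0 -> (u <= brmx cc A B)%MS ->
  exists i j, herm (lbr_gen cc (row i A) (row j B)) u != 0.
Proof.
move=> u0 uAB.
have : ~~ [forall ij : 'I_m * 'I_p, herm (lbr_gen cc (row ij.1 A) (row ij.2 B)) u == 0].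
  apply: contraNN (herm_neq0 u0) => /forallP ij_u.
  have : (brmx cc A B <= kermx (cplx P *m (cj u)^T))%MS.
    apply/sumsmx_subP => ij _; rewrite genmxE; apply/herm_kermxP => v /sub_rVP[d ->].
    by rewrite hermZr (eqP (ij_u ij)) mulr0.
  by move/(submx_trans uAB)/herm_kermxP/(_ u (submx_refl u)) ->.
by case/forallPn => -[i j] /= ?; exists i, j.
Qed.

End HermitianForm.

Section CommonEigenvector.
Variables (F : closedFieldType) (n : nat).

Lemma stable_eigenvector (W A : 'M[F]_n) : (0 < \rank W)%N -> stablemx W A ->
  exists2 w : 'rV_n, (w != 0) && (w <= W)%MS & exists l, (w <= eigenspace A l)%MS.
Proof.
move=> rW sWA; set B := row_base W.
have sBA : stablemx B A by rewrite stablemx_row_base.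
set A' := B *m A *m pinvmx B.
have EA : A' *m B = B *m A by rewrite mulmxKpV.
have : size (char_poly A') != 1%N by rewrite size_char_poly eqSS -lt0n.
case/closed_rootP => l; rewrite -eigenvalue_root_char => /eigenvalueP [v vA v0].
exists (v *m B).
  rewrite mulmx_free_eq0 ?row_base_free // v0 /=.
  by rewrite -(eq_row_base W) submxMl.
by exists l; apply/eigenspaceP; rewrite -mulmxA -EA mulmxA vA scalemxAl.
Qed.

Lemma common_eigenvector (As : seq 'M[F]_n) (W : 'M[F]_n) :
  (0 < \rank W)%N -> {in As, forall A, stablemx W A} ->
  {in As &, forall A B, comm_mx A B} ->
  exists2 w : 'rV_n, (w != 0) && (w <= W)%MS &
    {in As, forall A, exists l, (w <= eigenspace A l)%MS}.
Proof.
elim: As W => [|A As IH] W rW sW cW.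
  by have [w Ww _] := stable_eigenvector rW (stablemx0 W); exists w.
have [w /andP[w0 wW] [l wA]] := stable_eigenvector rW (sW A (mem_head _ _)).
set W' := (W :&: eigenspace A l)%MS.
have rW' : (0 < \rank W')%N.
  apply: leq_trans (mxrankS _ : \rank w <= _)%N; first by rewrite rank_rV lt0b.
  by rewrite sub_capmx wW.
have sW' : {in As, forall B, stablemx W' B}.
  move=> B BAs; have AsB : B \in A :: As by rewrite in_cons BAs orbT.
  rewrite sub_capmx (submx_trans (submxMr B (capmxSl _ _)) (sW B AsB)) /=.
  apply: submx_trans (submxMr B (capmxSr _ _)) _.
  by apply: comm_mx_stable_eigenspace; apply: cW; rewrite ?mem_head.
have cW' : {in As &, forall A B, comm_mx A B}.
  by move=> B C BAs CAs; apply: cW; rewrite in_cons ?BAs ?CAs orbT.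
have [w' /andP[w'0 w'W'] Hw'] := IH W' rW' sW' cW'.
exists w'; first by rewrite w'0 (submx_trans w'W') ?capmxSl.
move=> B; rewrite in_cons => /orP[/eqP ->|/Hw'//].
by exists l; apply: submx_trans w'W' (capmxSr _ _).
Qed.

End CommonEigenvector.

Section ComplexifiedBracket.
Variables (R : realType) (n : nat) (c : cst R n).
Hypothesis lie_c : is_lie c.

Local Notation cC := (fun i j k => (c i j k)%:C%C).
Local Notation adC := (ad_mx cC).

Lemma lbrCE u v : lbrC c u v = v *m adC u.
Proof. exact: lbr_genE. Qed.

Lemma adC_cplx y : adC (cplx y) = cplx (adm c y).
Proof. by rewrite map_ad_mx admE. Qed.

Lemma adC_derivation : ad_derivation cC.
Proof. exact/map_ad_derivation/adm_derivation. Qed.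

Lemma lbrC_cplx x y : lbrC c (cplx x) (cplx y) = cplx (lbr c x y).
Proof. by rewrite lbrCE adC_cplx lbrE -map_mxM. Qed.

Lemma brmx_cplx m p (A : 'M[R]_(m, n)) (B : 'M[R]_(p, n)) (z : 'rV[R]_n) :
  (z <= brmx c A B)%MS ->
  (cplx z <= brmx cC (cplx A) (cplx B))%MS.
Proof.
case/sub_sumsmxP => u ->; rewrite /cplx map_mx_sum; apply: summx_sub => ij _.
rewrite map_mxM; apply: submx_trans (submxMl _ _) _; rewrite map_genmx genmxE.
change (cplx (lbr c (row ij.1 A) (row ij.2 B)) <= brmx cC (cplx A) (cplx B))%MS.
by rewrite -lbrC_cplx; apply: brmx_sub; rewrite map_submx row_sub.
Qed.

End ComplexifiedBracket.

Section Weights.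
Variables (R : realType) (n : nat) (c : cst R n) (th T : 'M[R]_n).
Hypotheses (lie_c : is_lie c) (cartan_th : cartan_invol c th)
  (T_k : forall y : 'rV[R]_n, (y <= T)%MS -> y *m th = y).

Local Notation hermC := (herm (cartan_mx c th)).

Lemma in_gCE b u :
  in_gC c T b u <-> forall y, (y <= T)%MS -> u *m cplx (adm c y) = b y *: u.
Proof. by split=> bu y /bu; rewrite lbrCE adC_cplx. Qed.

Lemma in_gC_lbrC b g u v : in_gC c T b u -> in_gC c T g v ->
  in_gC c T (fun y => b y + g y) (lbrC c u v).
Proof.
move=> bu gv y yT; have := bu y yT; have := gv y yT; rewrite !lbrCE => Dg Db.
rewrite -mulmxA (adC_derivation lie_c) mulmxDr mulmxA Dg Db linearZ /=.
by rewrite -scalemxAl -scalemxAr scalerDl addrC.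
Qed.

Lemma hermC_adm_skew y u v : (y <= T)%MS ->
  hermC (u *m cplx (adm c y)) v = - hermC u (v *m cplx (adm c y)).
Proof.
by move=> yT; apply/herm_skew/(cartan_mx_skew lie_c (proj1 cartan_th) (T_k yT)).
Qed.

Lemma hermC_neq0 u : u != 0 -> hermC u u != 0.
Proof.
apply: herm_neq0; first by apply: cartan_mx_tr; case: cartan_th.
by move=> x; apply: cartan_mx_pos.
Qed.

Lemma eigenvalue_imag y (u : 'rV[R[i]]_n) mu : u != 0 -> (y <= T)%MS ->
  u *m cplx (adm c y) = mu *: u -> complex.Re mu = 0.
Proof.
move=> u0 yT Eu; have := hermC_adm_skew u u yT; rewrite Eu hermZl hermZr.
move/eqP; rewrite -subr_eq0 opprK -mulrDl mulf_eq0 (negbTE (hermC_neq0 u0)) orbF.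
move/eqP; clear Eu; case: mu => a b /(congr1 (@complex.Re R)) /= /eqP.
by rewrite -mulr2n mulrn_eq0 => /eqP.
Qed.

Lemma weight_of_eigenvector (u : 'rV[R[i]]_n) : u != 0 ->
  (forall y, (y <= T)%MS -> exists mu, u *m cplx (adm c y) = mu *: u) ->
  exists b, lin_form T b /\ in_gC c T b u.
Proof.
move=> u0 eig_u; have [j uj] := rV0Pn _ u0.
pose b y := (u *m cplx (adm c y)) 0 j / u 0 j.
have bu y : (y <= T)%MS -> u *m cplx (adm c y) = b y *: u.
  by case/eig_u => mu Eu; rewrite /b Eu mxE mulfK.
exists b; split; last exact/in_gCE.
split; [|split] => [y z _ _ | r y _ | y yT].
- by rewrite /b /cplx !admE linearD map_mxD mulmxDr mxE mulrDl.
- by rewrite /b /cplx !admE linearZ map_mxZ -scalemxAr mxE mulrA.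
- exact: eigenvalue_imag u0 yT (bu y yT).
Qed.

Lemma hermC_weight_orth b d u w y : in_gC c T b u -> in_gC c T d w ->
  lin_form T d -> (y <= T)%MS -> b y != d y -> hermC u w = 0.
Proof.
move=> /in_gCE bu /in_gCE dw [_ [_ d_imag]] yT bd.
have := hermC_adm_skew u w yT; rewrite bu // dw // hermZl hermZr.
rewrite conjc_imag ?d_imag // mulNr opprK => /eqP.
by rewrite -subr_eq0 -mulrBl mulf_eq0 subr_eq0 (negbTE bd) => /eqP.
Qed.

Lemma Sigma_m_or_zero b w : w != 0 -> (w <= eigenspace (cplx th) (-1))%MS ->
  lin_form T b -> in_gC c T b w -> in_Sigma_m c th T b \/ form_zero T b.
Proof.
move=> w0 /eigenspaceP wm lin_b bw.
have [|nz] := classic (form_zero T b); first by right.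
by left; do 2!split=> //; exists w; rewrite wm scaleN1r.
Qed.

Hypothesis T_abelian : abelian_sub c T.
Local Notation mC := (eigenspace (cplx th) (-1)).

Definition weight_vector u :=
  [/\ u != 0, (u <= mC)%MS & exists b, lin_form T b /\ in_gC c T b u].

Lemma adm_T_comm y z : (y <= T)%MS -> (z <= T)%MS ->
  comm_mx (cplx (adm c y)) (cplx (adm c z)).
Proof.
move=> yT zT; have := T_abelian zT yT; rewrite lbrE admE => zy0.
by rewrite /comm_mx -!map_mxM !admE adm_derivation // zy0 linear0 add0r.
Qed.

Lemma mC_adm_stable y : (y <= T)%MS -> stablemx mC (cplx (adm c y)).
Proof.
move=> yT; apply: comm_mx_stable_eigenspace.
by rewrite /comm_mx -!map_mxM (adm_commute (proj1 cartan_th) (T_k yT)).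
Qed.

Lemma weight_vector_notin m (V : 'M[R[i]]_(m, n)) : (V <= mC)%MS ->
  (forall y, (y <= T)%MS -> stablemx V (cplx (adm c y))) -> ~~ (mC <= V)%MS ->
  exists w, weight_vector w /\ ~~ (w <= V)%MS.
Proof.
move=> VmC stV mCV.
(* W is the H-orthogonal complement of V in m_C; ad t preserves it by skewness. *)
set Q := cplx (cartan_mx c th) *m (map_mx (@conjc R) V)^T.
set W := (mC :&: kermx Q)%MS.
have rW : (0 < \rank W)%N.
  have rQV : (\rank Q <= \rank V)%N.
    by apply: leq_trans (mxrankM_maxr _ _) _; rewrite mxrank_tr mxrank_map.
  have rVmC : (\rank V < \rank mC)%N by apply: rank_ltmx; rewrite ltmxE VmC.
  have := mxrank_sum_cap mC (kermx Q); have := rank_leq_col (mC + kermx Q)%MS.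
  have := rank_leq_row Q.
  rewrite mxrank_ker /W; lia.
set As := [seq cplx (adm c (row i T)) | i <- enum 'I_n].
have AsT A : A \in As -> exists2 y, (y <= T)%MS & A = cplx (adm c y).
  by case/mapP => i _ ->; exists (row i T); rewrite ?row_sub.
have stW : {in As, forall A, stablemx W A}.
  move=> A /AsT[y yT ->]; apply/row_subP => i; rewrite row_mul.
  have := row_sub i W; rewrite /W !sub_capmx => /andP[umC uQ].
  rewrite (submx_trans (submxMr _ umC) (mC_adm_stable yT)) /=.
  apply/herm_kermxP => v vV; rewrite hermC_adm_skew // (herm_kermxP _ _ _ uQ) ?oppr0 //.
  exact: submx_trans (submxMr _ vV) (stV y yT).
have cAs : {in As &, forall A B, comm_mx A B}.
  by move=> A B /AsT[y yT ->] /AsT[z zT ->]; apply: adm_T_comm.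
have [w /andP[w0]] := common_eigenvector rW stW cAs.
rewrite /W sub_capmx => /andP[wmC wQ] eig_w.
have [b [lin_b bw]] : exists b, lin_form T b /\ in_gC c T b w.
  apply: (@weight_of_eigenvector w) => // y /submxP[d ->].
  have eig_i i : exists l, (w <= eigenspace (cplx (adm c (row i T))) l)%MS.
    exact/eig_w/map_f/mem_enum.
  exists (\sum_i (d 0 i)%:C%C * xchoose (eig_i i)).
  rewrite (mulmx_sum_row d T) admE linear_sum /cplx map_mx_sum mulmx_sumr.
  rewrite scaler_suml; apply: eq_bigr => i _.
  move: (xchoose _) (xchooseP (eig_i i)) => l /eigenspaceP.
  rewrite /cplx admE => eig_wi.
  by rewrite linearZ map_mxZ -scalemxAr eig_wi scalerA.
exists w; split; first by split=> //; exists b.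
apply/negP => wV; move: (hermC_neq0 w0); rewrite (herm_kermxP _ _ _ wQ) ?eqxx //.
Qed.

Lemma weight_basis : exists K (F : 'M[R[i]]_(K, n)),
  (forall i, weight_vector (row i F)) /\ (mC <= F)%MS.
Proof.
suff grow d K (F : 'M[R[i]]_(K, n)) : (n - \rank F <= d)%N ->
    (forall i, weight_vector (row i F)) ->
    exists K' (F' : 'M[R[i]]_(K', n)),
      (forall i, weight_vector (row i F')) /\ (mC <= F')%MS.
  by apply: (grow n 0 0) => [|[]]; rewrite ?leq_subr.
elim: d K F => [|d IHd] K F rF wF.
  exists K, F; split=> //; apply: submx_full.
  by rewrite /row_full eqn_leq rank_leq_col /=; lia.
have [mCF|mCF] := boolP (mC <= F)%MS; first by exists K, F.
have FmC : (F <= mC)%MS by apply/row_subP => i; case: (wF i).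
have stF y : (y <= T)%MS -> stablemx F (cplx (adm c y)).
  move=> yT; apply/row_subP => i; rewrite row_mul.
  by have [_ _ [b [_ /in_gCE ->]]] := wF i; rewrite ?scalemx_sub ?row_sub.
have [w [ww wF']] := weight_vector_notin FmC stF mCF.
apply: (IHd _ (col_mx F w)).
  have : (F < F + w)%MS by rewrite ltmxE addsmxSl addsmx_sub submx_refl.
  move/rank_ltmx; rewrite addsmxE; have := rank_leq_col (col_mx F w).
  (* [set] merges two elaborations of [col_mx F w] that lia would keep apart. *)
  by set G := col_mx F w; lia.
by move=> i; case: (split_ordP i) => j ->; rewrite ?rowKu ?rowKd ?row_id.
Qed.

End Weights.

Section BracketsOfWeightVectors.
Variables (R : realType) (n : nat) (c : cst R n) (th sg : 'M[R]_n).
Hypotheses (lie_c : is_lie c) (cartan_th : cartan_invol c th)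
  (invol_sg : is_invol c sg) (th_sg : th *m sg = sg *m th)
  (noncompact : ~ compact_lie c) (no_ideals : no_sigma_ideals c sg).

Local Notation cC := (fun i j k => (c i j k)%:C%C).

Lemma kC_sub_brmx K (F : 'M[R[i]]_(K, n)) (u : 'rV[R[i]]_n) :
  (eigenspace (cplx th) (-1) <= F)%MS -> u *m cplx th = u ->
  (u <= brmx cC F F)%MS.
Proof.
move=> mC_F uk.
have kk_F (z : 'rV[R]_n) : (z <= eigenspace th 1)%MS ->
    (cplx z <= brmx cC F F)%MS.
  move=> zk; have kk_mm := kk_sub_brmm lie_c (proj1 cartan_th) cartan_th noncompact
    no_ideals invol_sg th_sg.
  apply: submx_trans (brmx_cplx (submx_trans zk kk_mm)) _.
  by apply: brmxS; rewrite /cplx map_eigenspace rmorphN1.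
have /eigenspace_cplx_ReIm[/kk_F uRe /kk_F uIm] : (u <= eigenspace (cplx th) 1%:C%C)%MS.
  by apply/eigenspaceP; rewrite rmorph1 scale1r.
by rewrite [u]cplx_ReIm addmx_sub ?scalemx_sub.
Qed.

End BracketsOfWeightVectors.

Theorem lemma1 (R : realType) (n : nat) (c : cst R n)
    (th sg T : 'M[R]_n) :
  is_lie c -> semisimple c ->
  cartan_invol c th -> is_invol c sg -> th *m sg = sg *m th ->
  max_abelian_kq c th sg T ->
  ~ compact_lie c -> no_sigma_ideals c sg ->
  forall a : 'rV[R]_n -> complex R,
    in_Sigma c T a -> kC_nz c th T a ->
    exists b g : 'rV[R]_n -> complex R,
      (in_Sigma_m c th T b \/ form_zero T b) /\
      (in_Sigma_m c th T g \/ form_zero T g) /\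
      (forall y : 'rV[R]_n, (y <= T)%MS -> a y = b y + g y).
Proof.
move=> lie_c _ cartan_th invsg th_sg [T_kq [T_ab _]] noncpt nsi a [lin_a _]
  [x [x0 [ax xk]]].
have T_k (y : 'rV_n) : (y <= T)%MS -> y *m th = y by move=> yT; case: (T_kq y yT).
have [K [F [wF mC_F]]] := weight_basis lie_c cartan_th T_k T_ab.
have [k [l kl_x]] := herm_brmx_neq0 (cartan_mx_tr (proj1 cartan_th))
  (fun y => cartan_mx_pos cartan_th) x0
  (kC_sub_brmx lie_c cartan_th invsg th_sg noncpt nsi mC_F xk).
have [Fk0 Fk_m [b [lin_b bFk]]] := wF k; have [Fl0 Fl_m [g [lin_g gFl]]] := wF l.
exists b, g; split; first exact: Sigma_m_or_zero Fk0 Fk_m lin_b bFk.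
split; first exact: Sigma_m_or_zero Fl0 Fl_m lin_g gFl.
move=> y yT; apply: contraNeq kl_x => ne; apply/eqP.
apply: (hermC_weight_orth lie_c cartan_th T_k (in_gC_lbrC lie_c bFk gFl) ax lin_a yT).
by rewrite eq_sym.
Qed.
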